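(* Assume the general single-user setting below and let $T=\tau_n+D_n$. For $1\le\tau\le T$ and each state $i$, let $e^*(\tau,i)$ denote the smallest element of $\mathcal E$ attaining the maximum in the recursion defining $V(0,\tau,i)$. Then $$e^*(\tau+1,i)\le e^*(\tau,i)\qquad\text{for all states } i \text{ and all } 1\le\tau<T.$$
   Context: General single-user setting (perfect prediction): fix $\beta\ge0$, $\lambda\ge0$ and integers $\tau_n\ge1$, $D_n\ge0$. The channel is a finite-state Markov chain on $\{1,\dots,K\}$ with transition matrix $(P^{i,j})$. $\mathcal E\subset[0,\infty)$ is a finite set of resource levels containing $0$ and at least one positive element. For each state $i$, $\zeta(i,\cdot):\mathcal E\to[0,1]$ is the transmission success probability, with $\zeta(i,0)=0$, $\zeta(i,e)>0$ for $e>0$, and $\zeta(i,\cdot)$ is the restriction to $\mathcal E$ of a concave, strictly increasing function. The value function is defined by $V(0,0,i)=0$ and, for $1\le\tau\le\tau_n+D_n$, $$V(0,\tau,i)=\max_{e\in\mathcal E}\Big\{-\lambda e+\zeta(i,e)\beta+(1-\zeta(i,e))\sum_{j}P^{i,j}V(0,\tau-1,j)\Big\}.$$ Here $\tau$ is the remaining time to deadline of an undelivered packet, $i$ the current channel state, $\beta$ the delivery reward and $\lambda$ the per-unit resource cost. *)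

(* the statement is purely algebraic/order-theoretic, so it is
   stated over an arbitrary real field R (this includes the real numbers). *)
From HB Require Import structures.
From mathcomp Require Import all_boot all_order all_algebra.
Set Implicit Arguments. Unset Strict Implicit. Unset Printing Implicit Defensive.
Import Order.TTheory GRing.Theory Num.Theory.
Local Open Scope ring_scope.

Definition stochastic {R : realFieldType} {K : nat} (P : 'M[R]_K) : Prop :=
  (forall i j, 0 <= P i j) /\ (forall i, \sum_(j < K) P i j = 1).

Definition concave_nonneg {R : realFieldType} (f : R -> R) : Prop :=
  forall x y t, 0 <= x -> 0 <= y -> 0 <= t -> t <= 1 ->
    t * f x + (1 - t) * f y <= f (t * x + (1 - t) * y).

Definition strict_incr_nonneg {R : realFieldType} (f : R -> R) : Prop :=
  forall x y, 0 <= x -> x < y -> f x < f y.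

(* The quantity maximized in the recursion, with continuation values W j
   (W = V(0, tau-1, .)):  -lam e + zeta(i,e) beta + (1-zeta(i,e)) sum_j P^{i,j} W j. *)
Definition Qval {R : realFieldType} {K : nat} (P : 'M[R]_K)
  (zeta : 'I_K -> R -> R) (beta lam : R) (W : 'I_K -> R) (i : 'I_K) (e : R) : R :=
  - (lam * e) + zeta i e * beta + (1 - zeta i e) * \sum_(j < K) P i j * W j.

(* V(0, tau, i).  The maximum over E is the big max over the list E, seeded
   with the value at e = 0 (which belongs to E, so this is exactly the max). *)
Fixpoint Vfun {R : realFieldType} {K : nat} (P : 'M[R]_K)
  (zeta : 'I_K -> R -> R) (beta lam : R) (E : seq R) (tau : nat) : 'I_K -> R :=
  fun i =>
    match tau with
    | 0 => 0
    | t.+1 => \big[Num.max/Qval P zeta beta lam (Vfun P zeta beta lam E t) i 0]_(e <- E)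
                 Qval P zeta beta lam (Vfun P zeta beta lam E t) i e
    end.

Definition Qtau {R : realFieldType} {K : nat} (P : 'M[R]_K)
  (zeta : 'I_K -> R -> R) (beta lam : R) (E : seq R) (tau : nat) (i : 'I_K) (e : R) : R :=
  Qval P zeta beta lam (Vfun P zeta beta lam E tau.-1) i e.

Definition is_estar {R : realFieldType} {K : nat} (P : 'M[R]_K)
  (zeta : 'I_K -> R -> R) (beta lam : R) (E : seq R) (tau : nat) (i : 'I_K) (e : R) : Prop :=
  [/\ e \in E,
      Qtau P zeta beta lam E tau i e = Vfun P zeta beta lam E tau i
    & forall e', e' \in E -> Qtau P zeta beta lam E tau i e' = Vfun P zeta beta lam E tau i ->
                 e <= e'].

From HB Require Import structures.
From mathcomp Require Import all_boot all_order all_algebra.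
From mathcomp Require Import lra.
Import Order.TTheory GRing.Theory Num.Theory.
Local Open Scope ring_scope.

(* V(0, tau, .) is nondecreasing in tau, hence so is the continuation value
   sum_j P^{i,j} V(0, tau - 1, j).  The objective has decreasing differences in
   (e, continuation value): raising e buys success probability, worth beta
   minus the continuation value.  So, as in Topkis' theorem, the smallest
   maximizer can only move down when the horizon grows.  Only P >= 0,
   zeta(i, 0) = 0, zeta <= 1 and the monotonicity of zeta(i, .) are used. *)

Section MinArgmax.

Set Implicit Arguments.
Unset Strict Implicit.

Variable R : realDomainType.

Lemma min_argmax_le (f g : R -> R) (s : seq R) e1 e2 :
  e1 \in s -> e2 \in s ->
  (forall e, e \in s -> g e <= g e1) ->
  (forall e, e \in s -> g e = g e1 -> e1 <= e) ->
  (forall e, e \in s -> f e <= f e2) ->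
  (e2 < e1 -> g e1 - g e2 <= f e1 - f e2) ->
  e1 <= e2.
Proof.
move=> e1s e2s g_max g_min f_max dd; rewrite leNgt; apply/negP => lt21.
have g_lt : g e2 < g e1.
  rewrite lt_neqAle g_max // andbT; apply/eqP => g_eq.
  by move: (g_min e2 e2s g_eq); rewrite leNgt lt21.
have := dd lt21; have := f_max e1 e1s; lra.
Qed.

End MinArgmax.

Section SingleUser.

Set Implicit Arguments.
Unset Strict Implicit.

Variables (R : realFieldType) (K : nat) (P : 'M[R]_K).
Variables (zeta : 'I_K -> R -> R) (beta lam : R) (E : seq R).

Local Notation Q := (Qval P zeta beta lam).
Local Notation V := (Vfun P zeta beta lam E).
Local Notation Qt := (Qtau P zeta beta lam E).

Lemma Qval0_le_Vfun t i : Q (V t) i 0 <= V t.+1 i.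
Proof. exact: bigmax_ge_id. Qed.

Lemma Qtau_le_Vfun t i e : e \in E -> Qt t.+1 i e <= V t.+1 i.
Proof. by move=> eE; apply: le_bigmax_seq. Qed.

Lemma is_estar_max t i e : is_estar P zeta beta lam E t.+1 i e ->
  forall e', e' \in E -> Qt t.+1 i e' <= Qt t.+1 i e.
Proof. by case=> _ -> _ e' e'E; apply: Qtau_le_Vfun. Qed.

Hypothesis P_ge0 : forall i j, 0 <= P i j.

Lemma Qval_le_cont W1 W2 i e :
  (forall j, W1 j <= W2 j) -> zeta i e <= 1 -> Q W1 i e <= Q W2 i e.
Proof.
move=> leW z_le1; rewrite /Qval lerD2l ler_wpM2l ?subr_ge0 //.
by apply: ler_sum => j _; apply: ler_wpM2l.
Qed.

Lemma Qval_decreasing_differences W1 W2 i e e' :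
  (forall j, W1 j <= W2 j) -> zeta i e' <= zeta i e ->
  Q W2 i e - Q W2 i e' <= Q W1 i e - Q W1 i e'.
Proof.
move=> leW le_zeta; rewrite /Qval.
set s1 := \sum_(j < K) _ * W1 j; set s2 := \sum_(j < K) _ * W2 j.
have le_s : s1 <= s2 by apply: ler_sum => j _; apply: ler_wpM2l.
have : 0 <= (zeta i e - zeta i e') * (s2 - s1) by apply: mulr_ge0; lra.
nra.
Qed.

Hypothesis zeta0 : forall i, zeta i 0 = 0.
Hypothesis zeta_le1 : forall i e, e \in E -> zeta i e <= 1.

Lemma Vfun_le_succ t i : V t i <= V t.+1 i.
Proof.
elim: t i => [|t IH] i.
  apply: le_trans _ (Qval0_le_Vfun 0 i); rewrite /Qval zeta0 big1 => [|j _].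
    by rewrite !mulr0 mul0r oppr0 !addr0.
  by rewrite mulr0.
have Q_mono e : zeta i e <= 1 -> Q (V t) i e <= Q (V t.+1) i e.
  by move=> ?; apply: Qval_le_cont.
rewrite [V t.+1 i]/= big_seq; apply: bigmax_le => [|e eE].
  by apply: le_trans (Q_mono 0 _) (Qval0_le_Vfun _ _); rewrite zeta0 ler01.
exact: le_trans (Q_mono e (zeta_le1 i eE)) (Qtau_le_Vfun t.+1 i eE).
Qed.

End SingleUser.

Theorem theorem6 (R : realFieldType) (K : nat) (P : 'M[R]_K)
  (E : seq R) (zeta : 'I_K -> R -> R) (beta lam : R) (tau_n D_n : nat) :
  0 <= beta -> 0 <= lam -> (1 <= tau_n)%N ->
  stochastic P ->
  uniq E -> 0 \in E -> (forall e, e \in E -> 0 <= e) -> has (fun e => 0 < e) E ->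
  (forall i, zeta i 0 = 0) ->
  (forall i e, e \in E -> 0 <= zeta i e <= 1) ->
  (forall i e, e \in E -> 0 < e -> 0 < zeta i e) ->
  (forall i, exists f : R -> R, concave_nonneg f /\ strict_incr_nonneg f /\
                                (forall e, e \in E -> zeta i e = f e)) ->
  forall (i : 'I_K) (tau : nat), (1 <= tau)%N -> (tau < tau_n + D_n)%N ->
  forall e1 e2,
    is_estar P zeta beta lam E tau.+1 i e1 ->
    is_estar P zeta beta lam E tau i e2 ->
    e1 <= e2.
Proof.
move=> _ _ _ [P_ge0 _] _ _ E_ge0 _ zeta0 zeta01 _ zeta_incr i [//|t] _ _ e1 e2.
have zeta_le1 j e : e \in E -> zeta j e <= 1 by move=> /(zeta01 j)/andP[].
move=> estar1 estar2; case: (estar1) => e1E eq1 min1; case: (estar2) => e2E _ _.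
apply: (min_argmax_le e1E e2E (is_estar_max estar1) _ (is_estar_max estar2)).
  by move=> e eE; rewrite eq1; apply: min1.
move=> lt21; apply: Qval_decreasing_differences => // [j|].
  exact: Vfun_le_succ.
have [f [_ [f_incr f_zeta]]] := zeta_incr i.
by rewrite !f_zeta //; apply/ltW/f_incr; first exact: E_ge0.
Qed.
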